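(* For any $k, J \in \mathbb{N}$ with $2ek < J$, and for each choice of activation $\sigma \in \{\exp, \sinh, \sin\}$, there exists a shallow (one-hidden-layer) neural network $f^{(k)} : \mathbb{C} \to \mathbb{C}$ using activation $\sigma$, with $O(J)$ neurons and weights of size $O(k)$, such that $$\sup_{|\xi| \leq 2} \left| f^{(k)}(\xi) - \xi^k \right| \leq 2 \left( \frac{2ek}{J} \right)^J.$$
   Context: A shallow neural network with activation $\sigma$ here means a function of the form $\xi \mapsto \sum_{j} a_j \sigma(w_j \xi + b_j)$ with complex weights $a_j, w_j, b_j$; the number of neurons is the number of summands. *)

From Stdlib Require Import Reals List.
From Coquelicot Require Import Coquelicot.
Open Scope R_scope.

Definition Cexp (z : C) : C :=
  (exp (Re z) * cos (Im z), exp (Re z) * sin (Im z)).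
Definition Csinh (z : C) : C := Cdiv (Cminus (Cexp z) (Cexp (Copp z))) (RtoC 2).
Definition Csin (z : C) : C :=
  Cdiv (Cminus (Cexp (Cmult Ci z)) (Cexp (Copp (Cmult Ci z)))) (Cmult (RtoC 2) Ci).

Inductive activation := Act_exp | Act_sinh | Act_sin.
Definition act (s : activation) : C -> C :=
  match s with Act_exp => Cexp | Act_sinh => Csinh | Act_sin => Csin end.

(* A shallow network is a list of neurons (a_j, w_j, b_j);
   it computes xi |-> sum_j a_j * sigma(w_j * xi + b_j).
   The number of neurons is the length of the list. *)
Definition shallow_net (sigma : C -> C) (nn : list (C * C * C)) (xi : C) : C :=
  fold_right (fun (n : C * C * C) (acc : C) =>
    Cplus (Cmult (fst (fst n)) (sigma (Cplus (Cmult (snd (fst n)) xi) (snd n)))) acc)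
    (RtoC 0) nn.

Definition weights_bounded (nn : list (C * C * C)) (M : R) : Prop :=
  List.Forall (fun n : C * C * C =>
    Cmod (fst (fst n)) <= M /\ Cmod (snd (fst n)) <= M /\ Cmod (snd n) <= M) nn.

From Stdlib Require Import Reals List Lia Lra Factorial.
From Coquelicot Require Import Coquelicot.
Import ListNotations.
Open Scope R_scope.

(* Let omega = exp(2 pi i / J).  The network
     f(xi) = k! / (J k^k) * sum_(j < J) omega^(-j k) exp(omega^j k xi)
   applies the roots-of-unity filter  sum_(j < J) omega^(j n) = J [J | n]  to the Taylor
   series of exp(k xi): only the monomials of degree congruent to k mod J survive, so
     f(xi) - xi^k = k! / k^k * sum_(q >= 1) (k xi)^(k + q J) / (k + q J)!.
   Truncating after degree k + 2J, the term q = 1 and the Taylor remainder are each at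
   most (2ek/J)^J on |xi| <= 2, by (k + n)! >= k! 2^k n! and n! >= (n/e)^n.
   Since e^u = sinh u - i sinh(u + i pi/2) and sinh u = -i sin(i u), an exp-network is
   also a sinh- or a sin-network with at most twice as many neurons, whose biases move
   by at most pi/2. *)

Lemma exp_le_compat x y : x <= y -> exp x <= exp y.
Proof. intros [Hlt | ->]; [now left; apply exp_increasing | lra]. Qed.

Lemma exp_mult_INR n x : exp (INR n * x) = exp x ^ n.
Proof.
  induction n as [|n IH]; [now rewrite Rmult_0_l, exp_0|].
  rewrite S_INR, <- tech_pow_Rmult, <- IH, <- exp_plus. f_equal; ring.
Qed.

Lemma pow_n_Cpow (x : C) n : pow_n x n = Cpow x n.
Proof. induction n as [|n IH]; simpl; [reflexivity|]. now rewrite IH. Qed.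

Lemma Cexp_add u v : Cexp (u + v) = (Cexp u * Cexp v)%C.
Proof.
  destruct u as [a b], v as [c d]; unfold Cexp, Cmult; simpl.
  rewrite exp_plus, cos_plus, sin_plus. apply injective_projections; simpl; ring.
Qed.

Lemma Cexp_0 : Cexp 0 = 1.
Proof. unfold Cexp, RtoC; simpl. rewrite exp_0, cos_0, sin_0. f_equal; ring. Qed.

Lemma Cmod_Cexp u : Cmod (Cexp u) = exp (Re u).
Proof.
  destruct u as [a b]; unfold Cexp, Cmod; simpl.
  transitivity (sqrt (exp a * exp a)); [f_equal | apply sqrt_square; left; apply exp_pos].
  pose proof (sin2_cos2 b) as H. unfold Rsqr in H.
  transitivity (exp a * exp a * (sin b * sin b + cos b * cos b)); [ring | rewrite H; ring].
Qed.

Lemma Cmod_Cexp_le u : Cmod (Cexp u) <= exp (Cmod u).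
Proof.
  rewrite Cmod_Cexp. apply exp_le_compat.
  pose proof (re_le_Cmod u) as H. apply Rabs_le_between in H. lra.
Qed.

Lemma Cmod_le_Re_Im c : Cmod c <= Rabs (Re c) + Rabs (Im c).
Proof.
  replace c with (RtoC (Re c) + RtoC (Im c) * Ci)%C at 1
    by (destruct c; unfold RtoC, Ci, Cmult, Cplus; simpl; f_equal; ring).
  eapply Rle_trans; [apply Cmod_triangle|].
  now rewrite Cmod_mult, Cmod_Ci, !Cmod_R, Rmult_1_r.
Qed.

Lemma Rabs_Im_le_Cmod c : Rabs (Im c) <= Cmod c.
Proof. eapply Rle_trans; [apply Rmax_r | apply Rmax_Cmod]. Qed.

Lemma Cexp_as_Csinh u : Cexp u = (Csinh u - Ci * Csinh (u + Ci * RtoC (PI / 2)))%C.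
Proof.
  assert (Hpi : (Ci * RtoC (PI / 2))%C = (0, PI / 2))
    by (unfold Ci, Cmult, RtoC; simpl; f_equal; ring).
  assert (Hi : Cexp (0, PI / 2) = Ci).
  { unfold Cexp, Ci; simpl. rewrite exp_0, cos_PI2, sin_PI2. f_equal; ring. }
  assert (Hmi : Cexp (- (0, PI / 2)) = (- Ci)%C).
  { unfold Cexp, Ci, Copp; simpl. rewrite Ropp_0, exp_0, cos_neg, sin_neg, cos_PI2, sin_PI2.
    f_equal; ring. }
  unfold Csinh. rewrite Hpi, Copp_plus_distr, !Cexp_add, Hi, Hmi.
  generalize (Cexp u) (Cexp (- u)); intros [p q] [r s].
  unfold Ci, Cmult, Cminus, Cplus, Copp, Cdiv, Cinv, RtoC; simpl. f_equal; field.
Qed.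

Lemma Csinh_as_Csin u : Csinh u = (- Ci * Csin (Ci * u))%C.
Proof.
  assert (Hii : (Ci * (Ci * u))%C = (- u)%C)
    by (destruct u; unfold Ci, Cmult, Copp; simpl; f_equal; ring).
  unfold Csin, Csinh. rewrite Hii. replace (- - u)%C with u by ring.
  field. exact Ci_nz.
Qed.

Fixpoint Csum (f : nat -> C) (n : nat) : C :=
  match n with O => RtoC 0 | S n => (Csum f n + f n)%C end.

Lemma Csum_ext f g n : (forall i, (i < n)%nat -> f i = g i) -> Csum f n = Csum g n.
Proof.
  induction n as [|n IH]; intros H; simpl; [reflexivity|].
  rewrite IH by (intros; apply H; lia). now rewrite H by lia.
Qed.

Lemma Csum_plus f g n : Csum (fun i => f i + g i)%C n = (Csum f n + Csum g n)%C.
Proof. induction n as [|n IH]; simpl; [ring|]. rewrite IH; ring. Qed.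

Lemma Csum_mult_l c f n : Csum (fun i => c * f i)%C n = (c * Csum f n)%C.
Proof. induction n as [|n IH]; simpl; [ring|]. rewrite IH; ring. Qed.

Lemma Csum_swap (f : nat -> nat -> C) n m :
  Csum (fun i => Csum (f i) m) n = Csum (fun j => Csum (fun i => f i j) n) m.
Proof.
  induction n as [|n IH]; simpl.
  - clear. induction m as [|m IH]; simpl; [reflexivity|]. rewrite <- IH; ring.
  - now rewrite IH, <- Csum_plus.
Qed.

Lemma Csum_const c n : Csum (fun _ => c) n = (INR n * c)%C.
Proof.
  induction n as [|n IH]; simpl Csum; [simpl; ring|].
  rewrite IH, S_INR, RtoC_plus; ring.
Qed.

Lemma Csum_delta a x n : (a < n)%nat ->
  Csum (fun m => if Nat.eqb m a then x else RtoC 0) n = x.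
Proof.
  induction n as [|n IH]; intros Ha; [lia|]. simpl.
  destruct (Nat.eqb_spec n a) as [-> | Hna].
  - rewrite (Csum_ext _ (fun _ => RtoC 0)), Csum_const; [ring|].
    intros i Hi. destruct (Nat.eqb_spec i a); [lia | reflexivity].
  - rewrite IH by lia; ring.
Qed.

Lemma Cmod_Csum_le f n B : (forall i, (i < n)%nat -> Cmod (f i) <= B) ->
  Cmod (Csum f n) <= INR n * B.
Proof.
  induction n as [|n IH]; intros H; simpl Csum.
  - rewrite Cmod_0; simpl; lra.
  - eapply Rle_trans; [apply Cmod_triangle|]. rewrite S_INR.
    assert (Cmod (Csum f n) <= INR n * B) by (apply IH; intros; apply H; lia).
    assert (Cmod (f n) <= B) by (apply H; lia). lra.
Qed.

Lemma geometric_Csum x n : ((x - 1) * Csum (fun j => x ^ j) n = x ^ n - 1)%C.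
Proof.
  induction n as [|n IH]; simpl Csum; [simpl; ring|].
  rewrite Cpow_S, Cmult_plus_distr_l, IH. ring.
Qed.

(** * Taylor remainder of the complex exponential *)

Definition Tpoly (z : C) (N : nat) : C :=
  Csum (fun m => RtoC (/ INR (fact m)) * z ^ m)%C N.

(* Taylor-Lagrange is only available for real functions, so it is applied to the
   real and imaginary parts separately; this costs the factor 2 in [Cexp_sub_Tpoly_le]. *)
Section Taylor_projection.

Variable p : C -> R.
Hypothesis p_plus : forall a b, p (a + b)%C = p a + p b.
Hypothesis p_scal : forall (r : R) c, p (r * c)%C = r * p c.
Hypothesis p_le_Cmod : forall c, Rabs (p c) <= Cmod c.
Hypothesis p_derive : forall z w t,
  is_derive (fun s : R => p (w * Cexp (s * z))%C) t (p (w * z * Cexp (t * z))%C).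

Lemma p_minus a b : p (a - b)%C = p a - p b.
Proof.
  replace (a - b)%C with (a + RtoC (-1) * b)%C by ring.
  rewrite p_plus, p_scal; ring.
Qed.

Lemma p_0 : p 0 = 0.
Proof. replace (RtoC 0) with (RtoC 0 * RtoC 0)%C by ring. rewrite p_scal; ring. Qed.

Lemma p_Csum f n : p (Csum f (S n)) = sum_f_R0 (fun m => p (f m)) n.
Proof.
  induction n as [|n IH].
  - simpl. rewrite p_plus, p_0; ring.
  - change (Csum f (S (S n))) with (Csum f (S n) + f (S n))%C.
    now rewrite p_plus, IH.
Qed.

Lemma Derive_n_p_Cexp z m : forall w t,
  Derive_n (fun s : R => p (w * Cexp (s * z))%C) m t = p (w * z ^ m * Cexp (t * z))%C /\
  ex_derive_n (fun s : R => p (w * Cexp (s * z))%C) m t.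
Proof.
  induction m as [|m IH]; intros w t.
  - split; [simpl; f_equal; ring | exact I].
  - assert (Hext : forall s : R, p (w * z ^ m * Cexp (s * z))%C =
                    Derive_n (fun s : R => p (w * Cexp (s * z))%C) m s)
      by (intros; symmetry; apply IH).
    split; simpl.
    + rewrite <- (Derive_ext _ _ _ Hext), (is_derive_unique _ _ _ (p_derive _ _ t)).
      f_equal; ring.
    + apply (ex_derive_ext _ _ _ Hext). eexists; apply p_derive.
Qed.

Lemma p_Cexp_Taylor_Lagrange z N : exists zeta, 0 < zeta < 1 /\
  p (Cexp z - Tpoly z (S N))%C = / INR (fact (S N)) * p (z ^ S N * Cexp (zeta * z))%C.
Proof.
  destruct (Taylor_Lagrange (fun s : R => p (1 * Cexp (s * z))%C) N 0 1 Rlt_0_1)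
    as [zeta [Hzeta Htaylor]].
  { intros t _ m _. apply Derive_n_p_Cexp. }
  exists zeta; split; [exact Hzeta|].
  rewrite Cmult_1_l, Cmult_1_l in Htaylor. rewrite p_minus, Htaylor.
  unfold Tpoly. rewrite p_Csum, (proj1 (Derive_n_p_Cexp _ _ _ _)), Cmult_1_l.
  erewrite sum_eq with (Bn := fun m => p (RtoC (/ INR (fact m)) * z ^ m)%C);
    [rewrite Rminus_0_r, pow1; unfold Rdiv; ring|].
  intros m _. rewrite (proj1 (Derive_n_p_Cexp _ _ _ _)), p_scal, Rminus_0_r, pow1.
  replace (1 * z ^ m * Cexp (0 * z))%C with (z ^ m)%C
    by (replace (RtoC 0 * z)%C with (RtoC 0) by ring; rewrite Cexp_0; ring).
  unfold Rdiv; ring.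
Qed.

Lemma p_Cexp_sub_Tpoly_le z N :
  Rabs (p (Cexp z - Tpoly z N)%C) <= Cmod z ^ N / INR (fact N) * exp (Cmod z).
Proof.
  destruct N as [|N].
  - replace (Cexp z - Tpoly z 0)%C with (Cexp z) by (unfold Tpoly; simpl Csum; ring).
    simpl; unfold Rdiv; rewrite Rinv_1, !Rmult_1_l.
    eapply Rle_trans; [apply p_le_Cmod | apply Cmod_Cexp_le].
  - destruct (p_Cexp_Taylor_Lagrange z N) as [zeta [Hzeta ->]].
    pose proof (INR_fact_lt_0 (S N)) as Hfact.
    rewrite Rabs_mult, Rabs_pos_eq by (left; apply Rinv_0_lt_compat; lra).
    unfold Rdiv; rewrite (Rmult_comm _ (/ _)), Rmult_assoc.
    apply Rmult_le_compat_l; [left; apply Rinv_0_lt_compat; lra|].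
    eapply Rle_trans; [apply p_le_Cmod|].
    rewrite Cmod_mult, Cmod_pow.
    apply Rmult_le_compat_l; [apply pow_le, Cmod_ge_0|].
    eapply Rle_trans; [apply Cmod_Cexp_le|]. apply exp_le_compat.
    rewrite Cmod_mult, Cmod_R, Rabs_pos_eq by lra.
    pose proof (Cmod_ge_0 z). nra.
Qed.

End Taylor_projection.

Lemma is_derive_Re_mult_Cexp z w t :
  is_derive (fun s : R => Re (w * Cexp (s * z))%C) t (Re (w * z * Cexp (t * z))%C).
Proof.
  destruct z as [a b], w as [c d]; unfold Cexp, Cmult, Re; simpl.
  auto_derive; [exact I | unfold Rminus; ring].
Qed.

Lemma is_derive_Im_mult_Cexp z w t :
  is_derive (fun s : R => Im (w * Cexp (s * z))%C) t (Im (w * z * Cexp (t * z))%C).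
Proof.
  destruct z as [a b], w as [c d]; unfold Cexp, Cmult, Im; simpl.
  auto_derive; [exact I | unfold Rminus; ring].
Qed.

Lemma Cexp_sub_Tpoly_le z N :
  Cmod (Cexp z - Tpoly z N)%C <= 2 * (Cmod z ^ N / INR (fact N) * exp (Cmod z)).
Proof.
  eapply Rle_trans; [apply Cmod_le_Re_Im|].
  assert (Hre := p_Cexp_sub_Tpoly_le Re re_plus re_scal_l re_le_Cmod
                   is_derive_Re_mult_Cexp z N).
  assert (Him := p_Cexp_sub_Tpoly_le Im im_plus im_scal_l Rabs_Im_le_Cmod
                   is_derive_Im_mult_Cexp z N).
  lra.
Qed.

(** * Roots of unity *)

Definition root_unity (J : nat) : C := Cexp (0, 2 * PI / INR J).

Lemma root_unity_pow J n : (root_unity J ^ n)%C = Cexp (0, INR n * (2 * PI / INR J)).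
Proof.
  induction n as [|n IH].
  - unfold Cexp; simpl; unfold RtoC. rewrite exp_0, Rmult_0_l, cos_0, sin_0. f_equal; ring.
  - rewrite Cpow_S, IH. unfold root_unity. rewrite <- Cexp_add, S_INR.
    unfold Cplus; simpl. f_equal; f_equal; ring.
Qed.

Lemma Cmod_root_unity_pow J n : Cmod (root_unity J ^ n)%C = 1.
Proof. rewrite root_unity_pow, Cmod_Cexp. apply exp_0. Qed.

Lemma root_unity_pow_order J : (0 < J)%nat -> (root_unity J ^ J)%C = 1.
Proof.
  intros HJ. assert (INR J <> 0) by (apply not_0_INR; lia).
  rewrite root_unity_pow. replace (INR J * (2 * PI / INR J)) with (2 * PI) by (field; auto).
  unfold Cexp, RtoC; simpl. rewrite exp_0, cos_2PI, sin_2PI. f_equal; ring.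
Qed.

Lemma root_unity_pow_neq_1 J r : (0 < r < J)%nat -> (root_unity J ^ r)%C <> 1.
Proof.
  intros Hr Heq.
  assert (HJ : 0 < INR J) by (apply lt_0_INR; lia).
  assert (Hr0 : 0 < INR r) by (apply lt_0_INR; lia).
  assert (HrJ : INR r < INR J) by (apply lt_INR; lia).
  set (theta := INR r * (2 * PI / INR J)).
  rewrite root_unity_pow in Heq. fold theta in Heq.
  unfold Cexp, RtoC in Heq; simpl in Heq. rewrite exp_0, !Rmult_1_l in Heq.
  injection Heq as Hcos Hsin.
  pose proof PI_RGT_0.
  assert (0 < theta < 2 * PI).
  { unfold theta; split; [apply Rmult_lt_0_compat; [lra | apply Rdiv_lt_0_compat; lra]|].
    replace (2 * PI) with (INR J * (2 * PI / INR J)) at 2 by (field; lra).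
    apply Rmult_lt_compat_r; [apply Rdiv_lt_0_compat|]; lra. }
  destruct (sin_eq_O_2PI_0 theta ltac:(lra) ltac:(lra) Hsin) as [E | [E | E]]; try lra.
  rewrite E, cos_PI in Hcos. lra.
Qed.

Lemma root_unity_pow_mod J q r : (0 < J)%nat ->
  (root_unity J ^ (q * J + r) = root_unity J ^ r)%C.
Proof.
  intros HJ. rewrite Cpow_add_r, Nat.mul_comm, Cpow_mult_r, root_unity_pow_order, Cpow_1_l
    by assumption.
  ring.
Qed.

Definition root_power_sum (J n : nat) : C := Csum (fun j => (root_unity J ^ j) ^ n)%C J.

Lemma root_power_sum_swap J n :
  root_power_sum J n = Csum (fun j => (root_unity J ^ n) ^ j)%C J.
Proof.
  apply Csum_ext; intros j _. now rewrite <- !Cpow_mult_r, Nat.mul_comm.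
Qed.

Lemma root_power_sum_multiple J q : (0 < J)%nat -> root_power_sum J (q * J) = INR J.
Proof.
  intros HJ. rewrite root_power_sum_swap, <- (Nat.add_0_r (q * J)), root_unity_pow_mod
    by assumption.
  rewrite (Csum_ext _ (fun _ => RtoC 1)) by (intros; apply Cpow_1_l).
  rewrite Csum_const; ring.
Qed.

Lemma root_power_sum_nonmultiple J q r : (0 < r < J)%nat ->
  root_power_sum J (q * J + r) = 0.
Proof.
  intros Hr. rewrite root_power_sum_swap, root_unity_pow_mod by lia.
  set (x := (root_unity J ^ r)%C).
  assert (Hx1 : (x - 1)%C <> 0).
  { intros E. apply (root_unity_pow_neq_1 J r Hr). fold x.
    replace x with ((x - 1) + 1)%C by ring. rewrite E; ring. }
  assert (HxJ : (x ^ J)%C = 1).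
  { unfold x. rewrite <- Cpow_mult_r, Nat.mul_comm, Cpow_mult_r,
      root_unity_pow_order, Cpow_1_l by lia. reflexivity. }
  transitivity (/ (x - 1) * ((x - 1) * Csum (fun j => x ^ j) J))%C; [field; exact Hx1|].
  rewrite geometric_Csum, HxJ. ring.
Qed.

Lemma Csum_roots_Tpoly J s x N :
  Csum (fun j => (root_unity J ^ j) ^ s * Tpoly (root_unity J ^ j * x) N)%C J =
  Csum (fun m => RtoC (/ INR (fact m)) * x ^ m * root_power_sum J (s + m))%C N.
Proof.
  unfold Tpoly.
  rewrite (Csum_ext _ (fun j => Csum (fun m =>
      RtoC (/ INR (fact m)) * x ^ m * (root_unity J ^ j) ^ (s + m))%C N)).
  - rewrite Csum_swap. apply Csum_ext; intros m _.
    unfold root_power_sum. now rewrite <- Csum_mult_l.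
  - intros j _. rewrite <- Csum_mult_l. apply Csum_ext; intros m _.
    rewrite Cpow_add_r, Cpow_mult_l. ring.
Qed.

Lemma roots_filter_Tpoly J k x : (k < J)%nat ->
  Csum (fun j => (root_unity J ^ j) ^ (J - k) * Tpoly (root_unity J ^ j * x) (k + 2 * J))%C J =
  (INR J * (RtoC (/ INR (fact k)) * x ^ k + RtoC (/ INR (fact (k + J))) * x ^ (k + J)))%C.
Proof.
  intros HkJ. rewrite Csum_roots_Tpoly.
  set (c := fun m => (RtoC (/ INR (fact m)) * x ^ m)%C).
  rewrite (Csum_ext _ (fun m => (if Nat.eqb m k then INR J * c k else 0)
                              + (if Nat.eqb m (k + J) then INR J * c (k + J)%nat else 0))%C).
  { rewrite Csum_plus, !Csum_delta by lia. unfold c; ring. }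
  intros m Hm. fold (c m).
  destruct (Nat.eqb_spec m k) as [Hmk | Hmk]; destruct (Nat.eqb_spec m (k + J)) as [HmkJ | HmkJ];
    try lia.
  - subst m. replace (J - k + k)%nat with (1 * J)%nat by lia.
    rewrite root_power_sum_multiple by lia. ring.
  - subst m. replace (J - k + (k + J))%nat with (2 * J)%nat by lia.
    rewrite root_power_sum_multiple by lia. ring.
  - destruct (Nat.lt_ge_cases m k); [|destruct (Nat.lt_ge_cases m (k + J))].
    + replace (J - k + m)%nat with (0 * J + (J - k + m))%nat by lia.
      rewrite root_power_sum_nonmultiple by lia. ring.
    + replace (J - k + m)%nat with (1 * J + (m - k))%nat by lia.
      rewrite root_power_sum_nonmultiple by lia. ring.
    + replace (J - k + m)%nat with (2 * J + (m - k - J))%nat by lia.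
      rewrite root_power_sum_nonmultiple by lia. ring.
Qed.

Lemma Cmod_roots_remainder_le J s x N B : Cmod x <= B ->
  Cmod (Csum (fun j => (root_unity J ^ j) ^ s *
          (Cexp (root_unity J ^ j * x) - Tpoly (root_unity J ^ j * x) N)) J)%C
  <= INR J * (2 * (B ^ N / INR (fact N) * exp B)).
Proof.
  intros Hx. apply Cmod_Csum_le. intros j _.
  rewrite Cmod_mult, Cmod_pow, Cmod_root_unity_pow, pow1, Rmult_1_l.
  eapply Rle_trans; [apply Cexp_sub_Tpoly_le|].
  rewrite Cmod_mult, Cmod_root_unity_pow, Rmult_1_l.
  pose proof (INR_fact_lt_0 N). pose proof (Cmod_ge_0 x).
  apply Rmult_le_compat_l; [lra|]. unfold Rdiv.
  apply Rmult_le_compat; [| left; apply exp_pos | | now apply exp_le_compat].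
  - apply Rmult_le_pos; [apply pow_le; lra | left; now apply Rinv_0_lt_compat].
  - apply Rmult_le_compat_r; [left; now apply Rinv_0_lt_compat|].
    apply pow_incr; lra.
Qed.

(** * Factorial estimates *)

Lemma fact_mul_pow2_le k n : (k <= n)%nat -> (fact k * 2 ^ k * fact n <= fact (k + n))%nat.
Proof.
  induction k as [|k IH]; intros Hkn; [simpl; lia|].
  specialize (IH ltac:(lia)).
  change (fact (S k + n)) with (S (k + n) * fact (k + n))%nat.
  change (fact (S k)) with (S k * fact k)%nat. rewrite Nat.pow_succ_r'.
  replace (S k * fact k * (2 * 2 ^ k) * fact n)%nat
    with (2 * S k * (fact k * 2 ^ k * fact n))%nat by ring.
  apply Nat.mul_le_mono; lia.
Qed.

Lemma fact_le_pow k : (fact k <= k ^ k)%nat.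
Proof.
  induction k as [|k IH]; [simpl; lia|].
  change (fact (S k)) with (S k * fact k)%nat. rewrite Nat.pow_succ_r'.
  apply Nat.mul_le_mono_l. eapply Nat.le_trans; [exact IH|].
  apply Nat.pow_le_mono_l. lia.
Qed.

Lemma pow_le_fact_mul_exp n : INR n ^ n <= INR (fact n) * exp 1 ^ n.
Proof.
  pose proof (INR_fact_lt_0 n) as Hfact.
  assert (Hterm : INR n ^ n / INR (fact n) <= exp (INR n)).
  { eapply Rle_trans; [|apply (exp_ge_taylor (INR n) n), pos_INR].
    destruct n as [|n]; [simpl; lra|].
    rewrite tech5.
    assert (0 <= sum_f_R0 (fun m => INR (S n) ^ m / INR (fact m)) n); [|lra].
    apply cond_pos_sum; intros m.
    apply Rdiv_le_0_compat; [apply pow_le, pos_INR | apply INR_fact_lt_0]. }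
  replace (exp (INR n)) with (exp 1 ^ n) in Hterm
    by (rewrite <- exp_mult_INR; f_equal; ring).
  rewrite Rmult_comm. now apply Rle_div_l.
Qed.

(* Also for [k = 0], as [0 ^ 0 = 1]: the construction below needs no special case. *)
Lemma pow_self_pos k : 0 < INR k ^ k.
Proof. destruct k as [|k]; [simpl; lra|]. apply pow_lt, lt_0_INR; lia. Qed.

Lemma scaled_Taylor_coeff_le k n : (k <= n)%nat -> (0 < n)%nat ->
  INR (fact k) / INR k ^ k * ((2 * INR k) ^ (k + n) / INR (fact (k + n)))
  <= (2 * exp 1 * INR k / INR n) ^ n.
Proof.
  intros Hkn Hn.
  assert (Hn0 : 0 < INR n) by (apply lt_0_INR; lia).
  assert (Hkk : 0 < INR k ^ k).
  { destruct k as [|k]; [simpl; lra|]. apply pow_lt, lt_0_INR; lia. }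
  pose proof (INR_fact_lt_0 n) as Hfn. pose proof (INR_fact_lt_0 (k + n)) as Hfkn.
  pose proof (pos_INR k) as Hk0.
  assert (Hbinom := le_INR _ _ (fact_mul_pow2_le k n Hkn)).
  rewrite !mult_INR, pow_INR in Hbinom. replace (INR 2) with 2 in Hbinom by (simpl; ring).
  assert (Hstirling := pow_le_fact_mul_exp n).
  assert (Hx : 0 <= (2 * INR k) ^ n) by (apply pow_le; lra).
  assert (He : 0 < exp 1 ^ n) by (apply pow_lt, exp_pos).
  transitivity ((2 * INR k) ^ n / INR (fact n)).
  - rewrite pow_add, Rpow_mult_distr.
    replace (INR (fact k) / INR k ^ k * (2 ^ k * INR k ^ k * (2 * INR k) ^ n / INR (fact (k + n))))
      with ((2 * INR k) ^ n * (INR (fact k) * 2 ^ k) / INR (fact (k + n))) by (field; lra).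
    apply Rle_div_l; [lra|]. unfold Rdiv.
    rewrite Rmult_assoc. apply Rmult_le_compat_l; [exact Hx|].
    rewrite (Rmult_comm (/ _)). apply (Rle_div_r _ _ (INR (fact n))); lra.
  - replace (2 * exp 1 * INR k / INR n) with (2 * INR k * exp 1 * / INR n) by (field; lra).
    set (x := 2 * INR k) in *. rewrite !Rpow_mult_distr, pow_inv, Rmult_assoc.
    apply Rmult_le_compat_l; [exact Hx|].
    rewrite <- (Rinv_inv (exp 1 ^ n)), <- Rinv_mult.
    apply Rinv_le_contravar.
    + apply Rmult_lt_0_compat; [now apply Rinv_0_lt_compat | apply pow_lt; lra].
    + rewrite Rmult_comm. now apply Rle_div_l.
Qed.

Lemma double_lt_of_exp_bound k J : 2 * exp 1 * INR k < INR J -> (2 * k < J)%nat.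
Proof.
  intros Hr. apply INR_lt. rewrite mult_INR.
  pose proof (exp_ineq1_le 1). pose proof (pos_INR k). simpl (INR 2). nra.
Qed.

Lemma two_exp_le_pow4 k J : (2 * k < J)%nat -> 2 * exp (2 * INR k) <= 4 ^ J.
Proof.
  intros HkJ.
  replace (exp (2 * INR k)) with (exp 1 ^ (2 * k))
    by (rewrite <- exp_mult_INR, mult_INR; f_equal; simpl; ring).
  assert (exp 1 ^ (2 * k) <= 4 ^ (2 * k)).
  { apply pow_incr. pose proof exp_le_3. pose proof (exp_pos 1). lra. }
  assert (4 ^ (2 * k + 1) <= 4 ^ J) by (apply Rle_pow; [lra | lia]).
  assert (0 <= 4 ^ (2 * k)) by (apply pow_le; lra).
  rewrite pow_add in *. simpl (4 ^ 1) in *. lra.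
Qed.

Lemma Taylor_remainder_coeff_le k J : 2 * exp 1 * INR k < INR J ->
  2 * exp (2 * INR k) * (2 * exp 1 * INR k / INR (2 * J)) ^ (2 * J)
  <= (2 * exp 1 * INR k / INR J) ^ J.
Proof.
  intros Hr. pose proof (double_lt_of_exp_bound k J Hr) as HkJ.
  assert (HJ : 0 < INR J) by (apply lt_0_INR; lia).
  set (r := exp 1 * INR k / INR J).
  assert (Hr0 : 0 <= r).
  { unfold r. apply Rdiv_le_0_compat; [|lra].
    apply Rmult_le_pos; [left; apply exp_pos | apply pos_INR]. }
  assert (Hr2 : r <= / 2) by (unfold r; apply Rle_div_l; lra).
  replace (2 * exp 1 * INR k / INR (2 * J)) with r by (unfold r; rewrite mult_INR; simpl; field; lra).
  replace (2 * exp 1 * INR k / INR J) with (2 * r) by (unfold r; field; lra).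
  replace (2 * J)%nat with (J + J)%nat by lia.
  rewrite pow_add, Rpow_mult_distr.
  assert (HrJ : r ^ J <= / 2 ^ J) by (rewrite <- pow_inv; apply pow_incr; lra).
  assert (H4 := two_exp_le_pow4 k J HkJ).
  assert (H2 : 0 < 2 ^ J) by (apply pow_lt; lra).
  assert (Hpos : 0 <= r ^ J) by (apply pow_le; lra).
  replace (4 ^ J) with (2 ^ J * 2 ^ J) in H4 by (rewrite <- Rpow_mult_distr; f_equal; lra).
  assert (2 * exp (2 * INR k) * r ^ J <= 2 ^ J).
  { transitivity (2 ^ J * 2 ^ J * / 2 ^ J); [|right; field; lra].
    apply Rmult_le_compat; try lra. pose proof (exp_pos (2 * INR k)); lra. }
  nra.
Qed.

Definition neuron (sigma : C -> C) (n : C * C * C) (xi : C) : C :=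
  (fst (fst n) * sigma (snd (fst n) * xi + snd n))%C.

Lemma shallow_net_cons sigma n nn xi :
  shallow_net sigma (n :: nn) xi = (neuron sigma n xi + shallow_net sigma nn xi)%C.
Proof. reflexivity. Qed.

Lemma shallow_net_app sigma l1 l2 xi :
  shallow_net sigma (l1 ++ l2) xi = (shallow_net sigma l1 xi + shallow_net sigma l2 xi)%C.
Proof.
  induction l1 as [|n l1 IH]; simpl app; [unfold shallow_net at 2; simpl; ring|].
  rewrite !shallow_net_cons, IH; ring.
Qed.

Fixpoint neurons (g : nat -> C * C * C) (n : nat) : list (C * C * C) :=
  match n with O => nil | S n => g n :: neurons g n end.

Lemma length_neurons g n : length (neurons g n) = n.
Proof. induction n; simpl; auto. Qed.

Lemma shallow_net_neurons sigma g n xi :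
  shallow_net sigma (neurons g n) xi = Csum (fun j => neuron sigma (g j) xi) n.
Proof.
  induction n as [|n IH]; [reflexivity|].
  simpl neurons; simpl Csum. rewrite shallow_net_cons, IH; ring.
Qed.

Lemma shallow_net_flat_map sigma tau g nn xi :
  (forall n, shallow_net sigma (g n) xi = neuron tau n xi) ->
  shallow_net sigma (flat_map g nn) xi = shallow_net tau nn xi.
Proof.
  intros Hg. induction nn as [|n nn IH]; [reflexivity|].
  simpl flat_map. now rewrite shallow_net_app, shallow_net_cons, Hg, IH.
Qed.

Lemma Forall_flat_map {A B} (P : A -> Prop) (Q : B -> Prop) (g : A -> list B) l :
  List.Forall P l -> (forall a, P a -> List.Forall Q (g a)) -> List.Forall Q (flat_map g l).
Proof.
  intros Hl Hg. induction Hl as [|a l Ha _ IH]; simpl; [constructor|].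
  apply Forall_app; auto.
Qed.

Lemma weights_bounded_mono nn M M' : M <= M' -> weights_bounded nn M -> weights_bounded nn M'.
Proof.
  intros HM. apply Forall_impl. intros n [Ha [Hw Hb]]. repeat split; lra.
Qed.

Lemma weights_bounded_neurons g n M :
  (forall j, (j < n)%nat ->
     Cmod (fst (fst (g j))) <= M /\ Cmod (snd (fst (g j))) <= M /\ Cmod (snd (g j)) <= M) ->
  weights_bounded (neurons g n) M.
Proof.
  induction n as [|n IH]; intros H; simpl; constructor.
  - apply H; lia.
  - apply IH; intros; apply H; lia.
Qed.

Definition exp_net_coeff (k J : nat) : R := INR (fact k) / (INR J * INR k ^ k).

(* The exponent [J - k] encodes [omega ^ (- j k)]. *)
Definition exp_net (k J : nat) : list (C * C * C) :=
  neurons (fun j => (exp_net_coeff k J * (root_unity J ^ j) ^ (J - k),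
                     root_unity J ^ j * INR k, RtoC 0)%C) J.

Lemma length_exp_net k J : length (exp_net k J) = J.
Proof. apply length_neurons. Qed.

Lemma exp_net_coeff_mul_J k J : (0 < J)%nat ->
  exp_net_coeff k J * INR J = INR (fact k) / INR k ^ k.
Proof.
  intros HJ. assert (0 < INR J) by (apply lt_0_INR; lia).
  pose proof (pow_self_pos k). unfold exp_net_coeff. field; lra.
Qed.

Lemma exp_net_coeff_bounds k J : (0 < J)%nat -> 0 <= exp_net_coeff k J <= 1.
Proof.
  intros HJ.
  assert (HJ1 : 1 <= INR J) by (apply (le_INR 1); lia).
  pose proof (pow_self_pos k). pose proof (INR_fact_lt_0 k).
  assert (Hfk : INR (fact k) <= INR k ^ k) by (rewrite <- pow_INR; apply le_INR, fact_le_pow).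
  unfold exp_net_coeff. split.
  - apply Rdiv_le_0_compat; [lra | nra].
  - apply Rle_div_l; nra.
Qed.

Lemma exp_net_weights k J : (0 < J)%nat -> weights_bounded (exp_net k J) (INR (S k)).
Proof.
  intros HJ. pose proof (exp_net_coeff_bounds k J HJ). rewrite S_INR.
  pose proof (pos_INR k).
  apply weights_bounded_neurons; intros j _; cbn [fst snd].
  rewrite !Cmod_mult, Cmod_pow, !Cmod_root_unity_pow, pow1, !Cmod_R, !Rabs_pos_eq
    by lra.
  lra.
Qed.

Lemma exp_net_error k J xi : (k < J)%nat ->
  (shallow_net Cexp (exp_net k J) xi - xi ^ k)%C =
  (exp_net_coeff k J * INR J * (RtoC (/ INR (fact (k + J))) * (INR k * xi) ^ (k + J))
   + exp_net_coeff k J * Csum (fun j => (root_unity J ^ j) ^ (J - k) *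
        (Cexp (root_unity J ^ j * (INR k * xi)) - Tpoly (root_unity J ^ j * (INR k * xi)) (k + 2 * J))) J)%C.
Proof.
  intros HkJ. unfold exp_net. rewrite shallow_net_neurons.
  set (A := exp_net_coeff k J).
  rewrite (Csum_ext _ (fun j =>
      A * ((root_unity J ^ j) ^ (J - k) * Tpoly (root_unity J ^ j * (INR k * xi)) (k + 2 * J))
    + A * ((root_unity J ^ j) ^ (J - k) * (Cexp (root_unity J ^ j * (INR k * xi))
              - Tpoly (root_unity J ^ j * (INR k * xi)) (k + 2 * J))))%C).
  2: { intros j _. unfold neuron; cbn [fst snd].
       replace (root_unity J ^ j * INR k * xi + 0)%C with (root_unity J ^ j * (INR k * xi))%C
         by ring.
       ring. }
  rewrite Csum_plus, !Csum_mult_l, roots_filter_Tpoly by assumption.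
  assert (Hlead : (A * (INR J * (RtoC (/ INR (fact k)) * (INR k * xi) ^ k)))%C = (xi ^ k)%C).
  { rewrite Cpow_mult_l, <- RtoC_pow.
    replace (A * (INR J * (RtoC (/ INR (fact k)) * (RtoC (INR k ^ k) * xi ^ k))))%C
      with (RtoC (A * INR J * / INR (fact k) * INR k ^ k) * xi ^ k)%C
      by (rewrite !RtoC_mult; ring).
    unfold A. rewrite exp_net_coeff_mul_J by lia.
    pose proof (pow_self_pos k). pose proof (INR_fact_lt_0 k).
    replace (INR (fact k) / INR k ^ k * / INR (fact k) * INR k ^ k) with 1 by (field; lra).
    ring. }
  rewrite <- Hlead. ring.
Qed.

Lemma exp_net_approx k J xi : 2 * exp 1 * INR k < INR J -> Cmod xi <= 2 ->
  Cmod (shallow_net Cexp (exp_net k J) xi - pow_n xi k)%C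
  <= 2 * (2 * exp 1 * INR k / INR J) ^ J.
Proof.
  intros Hr Hxi. pose proof (double_lt_of_exp_bound k J Hr) as HkJ.
  rewrite pow_n_Cpow, exp_net_error by lia.
  set (A := exp_net_coeff k J). set (x := (INR k * xi)%C).
  pose proof (exp_net_coeff_bounds k J ltac:(lia)) as HA. fold A in HA.
  assert (HAJ : A * INR J = INR (fact k) / INR k ^ k) by (apply exp_net_coeff_mul_J; lia).
  pose proof (pos_INR k). pose proof (pos_INR J). pose proof (INR_fact_lt_0 (k + J)).
  assert (Hx : Cmod x <= 2 * INR k).
  { unfold x. rewrite Cmod_mult, Cmod_R, Rabs_pos_eq by lra. nra. }
  eapply Rle_trans; [apply Cmod_triangle|]. rewrite <- Rplus_diag.
  apply Rplus_le_compat.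
  - eapply Rle_trans; [|apply scaled_Taylor_coeff_le; lia].
    rewrite !Cmod_mult, !Cmod_R, !Rabs_pos_eq, Cmod_pow, <- HAJ
      by (try (left; apply Rinv_0_lt_compat); nra).
    rewrite (Rmult_comm (/ _)).
    apply Rmult_le_compat_l; [nra|].
    apply Rmult_le_compat_r; [left; now apply Rinv_0_lt_compat|].
    apply pow_incr; split; [apply Cmod_ge_0 | exact Hx].
  - eapply Rle_trans; [|apply Taylor_remainder_coeff_le, Hr].
    eapply Rle_trans; [|apply Rmult_le_compat_l, scaled_Taylor_coeff_le; try lia].
    2: { pose proof (exp_pos (2 * INR k)). lra. }
    rewrite Cmod_mult, Cmod_R, Rabs_pos_eq by lra.
    eapply Rle_trans; [apply Rmult_le_compat_l, Cmod_roots_remainder_le, Hx; lra|].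
    right. rewrite <- Rmult_assoc, HAJ. ring.
Qed.

(** * Changing the activation *)

Definition exp_via_sinh (n : C * C * C) : list (C * C * C) :=
  let '(a, w, b) := n in [(a, w, b); (- Ci * a, w, b + Ci * RtoC (PI / 2))%C].

Definition sinh_via_sin (n : C * C * C) : list (C * C * C) :=
  let '(a, w, b) := n in [(- Ci * a, Ci * w, Ci * b)%C].

Lemma shallow_net_exp_via_sinh n xi :
  shallow_net Csinh (exp_via_sinh n) xi = neuron Cexp n xi.
Proof.
  destruct n as [[a w] b]. unfold exp_via_sinh, neuron; simpl.
  rewrite Cexp_as_Csinh.
  replace (w * xi + (b + Ci * RtoC (PI / 2)))%C with (w * xi + b + Ci * RtoC (PI / 2))%C
    by ring.
  ring.
Qed.

Lemma shallow_net_sinh_via_sin n xi :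
  shallow_net Csin (sinh_via_sin n) xi = neuron Csinh n xi.
Proof.
  destruct n as [[a w] b]. unfold sinh_via_sin, neuron; simpl.
  rewrite Csinh_as_Csin.
  replace (Ci * w * xi + Ci * b)%C with (Ci * (w * xi + b))%C by ring.
  ring.
Qed.

Lemma length_exp_via_sinh nn : length (flat_map exp_via_sinh nn) = (length nn * 2)%nat.
Proof. apply flat_map_constant_length. now intros [[a w] b] _. Qed.

Lemma length_sinh_via_sin nn : length (flat_map sinh_via_sin nn) = (length nn * 1)%nat.
Proof. apply flat_map_constant_length. now intros [[a w] b] _. Qed.

Lemma weights_bounded_exp_via_sinh nn M : weights_bounded nn M ->
  weights_bounded (flat_map exp_via_sinh nn) (M + PI / 2).
Proof.
  intros Hnn. pose proof PI_RGT_0.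
  apply (Forall_flat_map _ _ _ _ Hnn). intros [[a w] b] [Ha [Hw Hb]]; simpl in *.
  assert (Hpi : Cmod (Ci * RtoC (PI / 2)) = PI / 2)
    by (rewrite Cmod_mult, Cmod_Ci, Cmod_R, Rabs_pos_eq; lra).
  constructor; [|constructor; [|constructor]]; simpl; repeat split;
    rewrite ?Cmod_mult, ?Cmod_opp, ?Cmod_Ci, ?Rmult_1_l; try lra.
  eapply Rle_trans; [apply Cmod_triangle|]. lra.
Qed.

Lemma weights_bounded_sinh_via_sin nn M : weights_bounded nn M ->
  weights_bounded (flat_map sinh_via_sin nn) M.
Proof.
  intros Hnn. apply (Forall_flat_map _ _ _ _ Hnn). intros [[a w] b] [Ha [Hw Hb]]; simpl in *.
  constructor; [|constructor]; simpl; repeat split;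
    rewrite !Cmod_mult, ?Cmod_opp, Cmod_Ci, Rmult_1_l; assumption.
Qed.

Lemma exp_net_emulation s nn M : weights_bounded nn M ->
  exists nn', (length nn' <= 2 * length nn)%nat /\ weights_bounded nn' (M + PI / 2) /\
    forall xi, shallow_net (act s) nn' xi = shallow_net Cexp nn xi.
Proof.
  intros Hnn. pose proof PI_RGT_0.
  pose proof (weights_bounded_exp_via_sinh nn M Hnn) as Hsinh.
  destruct s; simpl act.
  - exists nn. split; [lia|]. split; [|reflexivity].
    apply (weights_bounded_mono _ M); [lra | exact Hnn].
  - exists (flat_map exp_via_sinh nn). rewrite length_exp_via_sinh. split; [lia|].
    split; [exact Hsinh|].
    intros xi. apply shallow_net_flat_map; intros; apply shallow_net_exp_via_sinh.
  - exists (flat_map sinh_via_sin (flat_map exp_via_sinh nn)).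
    rewrite length_sinh_via_sin, length_exp_via_sinh. split; [lia|].
    split; [now apply weights_bounded_sinh_via_sin|].
    intros xi. rewrite (shallow_net_flat_map _ Csinh) by (intros; apply shallow_net_sinh_via_sin).
    apply shallow_net_flat_map; intros; apply shallow_net_exp_via_sinh.
Qed.

Theorem lemma2 :
  forall s : activation,
  exists (Cn Cw : R), 0 < Cn /\ 0 < Cw /\
  forall k J : nat,
    2 * exp 1 * INR k < INR J ->
    exists nn : list (C * C * C),
      INR (length nn) <= Cn * INR J /\
      weights_bounded nn (Cw * INR (S k)) /\
      forall xi : C, Cmod xi <= 2 ->
        Cmod (Cminus (shallow_net (act s) nn xi) (pow_n xi k))
          <= 2 * (2 * exp 1 * INR k / INR J) ^ J.
Proof.
  intros s. exists 2, 3. split; [lra|]. split; [lra|].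
  intros k J Hr. pose proof (double_lt_of_exp_bound k J Hr) as HkJ.
  destruct (exp_net_emulation s (exp_net k J) (INR (S k)) (exp_net_weights k J ltac:(lia)))
    as [nn [Hlen [Hw Hnn]]].
  exists nn. split; [|split].
  - rewrite length_exp_net in Hlen. apply le_INR in Hlen. rewrite mult_INR in Hlen. simpl (INR 2) in Hlen. lra.
  - refine (weights_bounded_mono _ _ _ _ Hw).
    pose proof PI_4. rewrite S_INR. pose proof (pos_INR k). lra.
  - intros xi Hxi. rewrite Hnn. now apply exp_net_approx.
Qed.
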